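(* Let $\mathbb A$ be an abelian category with enough projective objects. An object $a:A_1\to A_0$ of $\mathbb A^{[1]}_c$ is discrete if and only if $a$ is a monomorphism in $\mathbb A$. Moreover, the functor $\mathrm{Dis}(\mathbb A^{[1]}_c)\to\mathbb A$, $a\mapsto\mathrm{Coker}(a)$, is an equivalence of categories, where $\mathrm{Dis}(\mathbb A^{[1]}_c)$ is the category whose objects are the discrete objects of $\mathbb A^{[1]}_c$ and whose morphisms are 2-isomorphism classes of morphisms of $\mathbb A^{[1]}_c$.
   Context: Let $\mathbb A$ be an abelian category. The 2-category $\mathbb A^{[1]}$ has as objects the morphisms $a:A_1\to A_0$ of $\mathbb A$. For objects $a:A_1\to A_0$ and $b:B_1\to B_0$, a morphism $a\to b$ is a pair $(f_0,f_1)$ of morphisms $f_i:A_i\to B_i$ of $\mathbb A$ with $b f_1=f_0 a$; composition is componentwise. A 2-arrow $(f_0,f_1)\Rightarrow(g_0,g_1)$ between morphisms $a\to b$ is a morphism $\alpha:A_0\to B_1$ of $\mathbb A$ with $f_1-g_1=\alpha a$ and $f_0-g_0=b\alpha$; vertical composition is addition of such $\alpha$'s, and whiskering is given by $(h_0,h_1)\circ\alpha=h_1\alpha$ and $\alpha\circ(e_0,e_1)=\alpha e_0$. All 2-arrows are invertible, so each $\mathbf{Hom}(a,b)$ is a groupoid; the zero object is $0\to 0$. $\mathbb A^{[1]}_c$ is the full 2-subcategory of $\mathbb A^{[1]}$ on the objects $a:A_1\to A_0$ with $A_0$ projective in $\mathbb A$. A morphism $f:a\to b$ of $\mathbb A^{[1]}_c$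 is faithful in $\mathbb A^{[1]}_c$ if for every object $x$ of $\mathbb A^{[1]}_c$ the functor $f\circ-:\mathbf{Hom}(x,a)\to\mathbf{Hom}(x,b)$ is faithful. An object $a$ is discrete if the morphism $a\to 0$ is faithful. *)

From Stdlib Require Import ClassicalEpsilon.
Set Implicit Arguments.
Unset Strict Implicit.

Record PreAdditive := {
  Ob :> Type;
  Hom : Ob -> Ob -> Type;
  comp : forall a b c, Hom b c -> Hom a b -> Hom a c;
  idm : forall a, Hom a a;
  comp_assoc : forall a b c d (h : Hom c d) (g : Hom b c) (f : Hom a b),
      comp h (comp g f) = comp (comp h g) f;
  comp_id_l : forall a b (f : Hom a b), comp (idm b) f = f;
  comp_id_r : forall a b (f : Hom a b), comp f (idm a) = f;
  add : forall a b, Hom a b -> Hom a b -> Hom a b;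
  zer : forall a b, Hom a b;
  opp : forall a b, Hom a b -> Hom a b;
  add_assoc : forall a b (f g h : Hom a b), add f (add g h) = add (add f g) h;
  add_comm : forall a b (f g : Hom a b), add f g = add g f;
  add_zero_l : forall a b (f : Hom a b), add (zer a b) f = f;
  add_opp_l : forall a b (f : Hom a b), add (opp f) f = zer a b;
  comp_add_l : forall a b c (g g' : Hom b c) (f : Hom a b),
      comp (add g g') f = add (comp g f) (comp g' f);
  comp_add_r : forall a b c (g : Hom b c) (f f' : Hom a b),
      comp g (add f f') = add (comp g f) (comp g f')
}.

Arguments Hom : clear implicits.
Arguments comp {p a b c} _ _.
Arguments idm {p} a.
Arguments add {p a b} _ _.
Arguments zer {p} a b.
Arguments opp {p a b} _.

Section Notions.
Variable C : PreAdditive.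

Definition sub {a b : C} (f g : Hom C a b) : Hom C a b := add f (opp g).

Definition is_mono {a b : C} (f : Hom C a b) : Prop :=
  forall x (g h : Hom C x a), comp f g = comp f h -> g = h.

Definition is_epi {a b : C} (f : Hom C a b) : Prop :=
  forall y (g h : Hom C b y), comp g f = comp h f -> g = h.

Definition is_iso {a b : C} (f : Hom C a b) : Prop :=
  exists g : Hom C b a, comp g f = idm a /\ comp f g = idm b.

Definition is_zero_obj (z : C) : Prop :=
  forall a : C, (forall f g : Hom C a z, f = g) /\ (forall f g : Hom C z a, f = g).

Definition is_product (a b p : C) (p1 : Hom C p a) (p2 : Hom C p b) : Prop :=
  forall x (f : Hom C x a) (g : Hom C x b),
    exists! u : Hom C x p, comp p1 u = f /\ comp p2 u = g.

Definition is_kernel {a b k : C} (f : Hom C a b) (i : Hom C k a) : Prop :=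
  comp f i = zer k b /\
  forall x (g : Hom C x a), comp f g = zer x b ->
    exists! u : Hom C x k, comp i u = g.

Definition is_cokernel {a b k : C} (f : Hom C a b) (q : Hom C b k) : Prop :=
  comp q f = zer a k /\
  forall y (g : Hom C b y), comp g f = zer a y ->
    exists! u : Hom C k y, comp u q = g.

Definition is_projective (P : C) : Prop :=
  forall (b c : C) (e : Hom C b c), is_epi e ->
    forall g : Hom C P c, exists h : Hom C P b, comp e h = g.

End Notions.

Record Abelian := {
  ab_pre :> PreAdditive;
  zobj : ab_pre;
  zobj_zero : is_zero_obj zobj;
  has_products : forall a b : ab_pre,
      exists (p : ab_pre) (p1 : Hom ab_pre p a) (p2 : Hom ab_pre p b),
        is_product p1 p2;
  has_kernels : forall (a b : ab_pre) (f : Hom ab_pre a b),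
      exists (k : ab_pre) (i : Hom ab_pre k a), is_kernel f i;
  has_cokernels : forall (a b : ab_pre) (f : Hom ab_pre a b),
      exists (k : ab_pre) (q : Hom ab_pre b k), is_cokernel f q;
  mono_is_kernel : forall (a b : ab_pre) (m : Hom ab_pre a b), is_mono m ->
      exists (c : ab_pre) (f : Hom ab_pre b c), is_kernel f m;
  epi_is_cokernel : forall (a b : ab_pre) (e : Hom ab_pre a b), is_epi e ->
      exists (c : ab_pre) (f : Hom ab_pre c a), is_cokernel f e
}.

Definition enough_projectives (A : Abelian) : Prop :=
  forall a : A, exists (P : A) (e : Hom A P a), is_projective P /\ is_epi e.

Section Arrows.
Variable A : Abelian.

Record arr := Arr { A1 : A; A0 : A; amap : Hom A A1 A0 }.

Record arr_hom (a b : arr) := ArrHom {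
  f0 : Hom A (A0 a) (A0 b);
  f1 : Hom A (A1 a) (A1 b);
  f_comm : comp (amap b) f1 = comp f0 (amap a)
}.

Lemma arr_comp_comm (a b c : arr) (g : arr_hom b c) (f : arr_hom a b) :
  comp (amap c) (comp (f1 g) (f1 f)) = comp (comp (f0 g) (f0 f)) (amap a).
Proof.
  rewrite comp_assoc, (f_comm g), <- !comp_assoc, (f_comm f); reflexivity.
Qed.

Definition arr_comp (a b c : arr) (g : arr_hom b c) (f : arr_hom a b) : arr_hom a c :=
  @ArrHom a c (comp (f0 g) (f0 f)) (comp (f1 g) (f1 f)) (arr_comp_comm g f).

Lemma arr_id_comm (a : arr) :
  comp (amap a) (idm (A1 a)) = comp (idm (A0 a)) (amap a).
Proof. rewrite comp_id_l, comp_id_r; reflexivity. Qed.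

Definition arr_id (a : arr) : arr_hom a a :=
  @ArrHom a a (idm (A0 a)) (idm (A1 a)) (arr_id_comm a).

Definition two_cell (a b : arr) (f g : arr_hom a b)
    (alpha : Hom A (A0 a) (A1 b)) : Prop :=
  sub (f1 f) (f1 g) = comp alpha (amap a) /\
  sub (f0 f) (f0 g) = comp (amap b) alpha.

(* f and g are 2-isomorphic (all 2-arrows are invertible) *)
Definition two_iso (a b : arr) (f g : arr_hom a b) : Prop :=
  exists alpha, two_cell f g alpha.

Definition in_c (a : arr) : Prop := is_projective (A0 a).

(* f : a -> b is faithful in A^[1]_c: for every x in A^[1]_c the functor
   f o - : Hom(x,a) -> Hom(x,b) is faithful; on 2-arrows it sends
   alpha to the whiskering f o alpha = f1 alpha. *)
Definition faithful_c (a b : arr) (f : arr_hom a b) : Prop :=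
  forall x : arr, in_c x ->
  forall (g h : arr_hom x a) (alpha beta : Hom A (A0 x) (A1 a)),
    two_cell g h alpha -> two_cell g h beta ->
    comp (f1 f) alpha = comp (f1 f) beta -> alpha = beta.

Definition arr_zero : arr := Arr (zer (zobj A) (zobj A)).

Lemma to_zero_comm (a : arr) :
  comp (amap arr_zero) (zer (A1 a) (zobj A)) =
  comp (zer (A0 a) (zobj A)) (amap a).
Proof. destruct (@zobj_zero A (A1 a)) as [H _]; apply H. Qed.

Definition to_zero (a : arr) : arr_hom a arr_zero :=
  @ArrHom a arr_zero (zer (A0 a) (zobj A)) (zer (A1 a) (zobj A)) (to_zero_comm a).

Definition discrete (a : arr) : Prop := faithful_c (to_zero a).

Section Coker.
Variables (K : arr -> A) (q : forall a : arr, Hom A (A0 a) (K a))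
          (Hq : forall a : arr, is_cokernel (amap a) (q a)).

Lemma coker_mor_ex (a b : arr) (f : arr_hom a b) :
  exists u : Hom A (K a) (K b), comp u (q a) = comp (q b) (f0 f).
Proof.
  destruct (Hq a) as [_ Ha]. destruct (Hq b) as [Hb _].
  destruct (Ha (K b) (comp (q b) (f0 f))) as [u [Hu _]].
  - rewrite <- comp_assoc, <- (f_comm f), comp_assoc, Hb.
    destruct (@zobj_zero A (A1 a)) as [_ _].
    assert (Z : forall x y z (g : Hom A x y), comp (zer y z) g = zer x z).
    { intros x y z g.
      assert (E : comp (zer y z) g = add (comp (zer y z) g) (comp (zer y z) g)).
      { rewrite <- comp_add_l, add_zero_l; reflexivity. }
      rewrite <- (add_zero_l (comp (zer y z) g)) at 1.
      rewrite <- (add_opp_l (comp (zer y z) g)) at 1.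
      rewrite <- add_assoc, <- E, add_opp_l; reflexivity. }
    apply Z.
  - exists u; exact Hu.
Qed.

Definition coker_mor (a b : arr) (f : arr_hom a b) : Hom A (K a) (K b) :=
  proj1_sig (constructive_indefinite_description _ (coker_mor_ex f)).

(* Coker is an equivalence Dis(A^[1]_c) -> A, where Dis(A^[1]_c) has as
   objects the discrete objects of A^[1]_c and as morphisms the
   2-isomorphism classes of morphisms: it is a well-defined functor on
   classes, fully faithful and essentially surjective. *)
Definition coker_equivalence : Prop :=
  (forall a b, in_c a -> discrete a -> in_c b -> discrete b ->
     forall f g : arr_hom a b, two_iso f g -> coker_mor f = coker_mor g) /\
  (forall a, in_c a -> discrete a -> coker_mor (arr_id a) = idm (K a)) /\
  (forall a b c, in_c a -> discrete a -> in_c b -> discrete b ->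
     in_c c -> discrete c ->
     forall (g : arr_hom b c) (f : arr_hom a b),
       coker_mor (arr_comp g f) = comp (coker_mor g) (coker_mor f)) /\
  (forall a b, in_c a -> discrete a -> in_c b -> discrete b ->
     forall u : Hom A (K a) (K b), exists f : arr_hom a b, coker_mor f = u) /\
  (forall a b, in_c a -> discrete a -> in_c b -> discrete b ->
     forall f g : arr_hom a b, coker_mor f = coker_mor g -> two_iso f g) /\
  (forall X : A, exists a : arr, in_c a /\ discrete a /\
     exists u : Hom A (K a) X, is_iso u).

End Coker.
End Arrows.

(* A 2-arrow between two morphisms x -> a is a map
   alpha : X0 -> A1 with a alpha = f0 - g0, and whiskering with a -> 0
   forgets alpha completely; so a is discrete exactly when alpha is
   determined by a alpha, i.e. when a is a monomorphism.  For the converse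
   direction one tests on x = (0 : P -> P) with P a projective cover of the
   source of a pair of maps equalised by a.
   For the cokernel functor, write q_a : A0 -> Coker a.  When b is mono,
   b is a kernel of q_b (abelian categories), so maps killed by q_b factor
   through b.  This gives: 2-isomorphic morphisms have equal cokernel maps
   (always), fullness (lift Coker a -> Coker b through the epi q_b using that
   A0 is projective, then factor through b), faithfulness (factor f0 - g0
   through b), and essential surjectivity (X is the cokernel of the kernel of
   a projective cover P -> X). *)
From Stdlib Require Import ClassicalEpsilon.
Set Implicit Arguments.
Unset Strict Implicit.

Section Preadditive.
Variable C : PreAdditive.

Lemma add_zero_r (a b : C) (f : Hom C a b) : add f (zer a b) = f.
Proof. rewrite add_comm; apply add_zero_l. Qed.

Lemma add_opp_r (a b : C) (f : Hom C a b) : add f (opp f) = zer a b.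
Proof. rewrite add_comm; apply add_opp_l. Qed.

Lemma add_cancel_l (a b : C) (x y z : Hom C a b) : add x y = add x z -> y = z.
Proof.
  intro H. rewrite <- (add_zero_l y), <- (add_zero_l z), <- (add_opp_l x),
    <- !add_assoc, H; reflexivity.
Qed.

Lemma comp_zero_l (a b c : C) (g : Hom C a b) : comp (zer b c) g = zer a c.
Proof.
  apply (add_cancel_l (x := comp (zer b c) g)).
  rewrite <- comp_add_l, add_zero_l, add_zero_r; reflexivity.
Qed.

Lemma comp_zero_r (a b c : C) (g : Hom C b c) : comp g (zer a b) = zer a c.
Proof.
  apply (add_cancel_l (x := comp g (zer a b))).
  rewrite <- comp_add_r, add_zero_l, add_zero_r; reflexivity.
Qed.

Lemma comp_opp_r (a b c : C) (g : Hom C b c) (f : Hom C a b) :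
  comp g (opp f) = opp (comp g f).
Proof.
  apply (add_cancel_l (x := comp g f)).
  rewrite <- comp_add_r, add_opp_r, add_opp_r, comp_zero_r; reflexivity.
Qed.

Lemma comp_opp_l (a b c : C) (g : Hom C b c) (f : Hom C a b) :
  comp (opp g) f = opp (comp g f).
Proof.
  apply (add_cancel_l (x := comp g f)).
  rewrite <- comp_add_l, add_opp_r, add_opp_r, comp_zero_l; reflexivity.
Qed.

Lemma comp_sub_r (a b c : C) (g : Hom C b c) (f f' : Hom C a b) :
  comp g (sub f f') = sub (comp g f) (comp g f').
Proof. unfold sub; rewrite comp_add_r, comp_opp_r; reflexivity. Qed.

Lemma comp_sub_l (a b c : C) (g g' : Hom C b c) (f : Hom C a b) :
  comp (sub g g') f = sub (comp g f) (comp g' f).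
Proof. unfold sub; rewrite comp_add_l, comp_opp_l; reflexivity. Qed.

Lemma sub_self (a b : C) (f : Hom C a b) : sub f f = zer a b.
Proof. apply add_opp_r. Qed.

Lemma sub_eq0 (a b : C) (f g : Hom C a b) : sub f g = zer a b -> f = g.
Proof.
  intro H. unfold sub in H.
  rewrite <- (add_zero_r f), <- (add_opp_l g), add_assoc, H, add_zero_l.
  reflexivity.
Qed.

Lemma mono_of_kills_zero (a b : C) (m : Hom C a b) :
  (forall x (g : Hom C x a), comp m g = zer x b -> g = zer x a) -> is_mono m.
Proof.
  intros H x g h E. apply sub_eq0, H.
  rewrite comp_sub_r, E; apply sub_self.
Qed.

Lemma cokernel_epi (a b k : C) (f : Hom C a b) (q : Hom C b k) :
  is_cokernel f q -> is_epi q.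
Proof.
  intros [H0 H] y g h E.
  destruct (H y (comp g q)) as [u [_ Hu]].
  - rewrite <- comp_assoc, H0, comp_zero_r; reflexivity.
  - rewrite <- (Hu g eq_refl), (Hu h (eq_sym E)); reflexivity.
Qed.

Lemma kernel_mono (a b k : C) (f : Hom C a b) (i : Hom C k a) :
  is_kernel f i -> is_mono i.
Proof.
  intros [H0 H] x g h E.
  destruct (H x (comp i g)) as [u [_ Hu]].
  - rewrite comp_assoc, H0, comp_zero_l; reflexivity.
  - rewrite <- (Hu g eq_refl), (Hu h (eq_sym E)); reflexivity.
Qed.

Lemma cokernel_unique (a b k k' : C) (f : Hom C a b)
    (q : Hom C b k) (q' : Hom C b k') :
  is_cokernel f q -> is_cokernel f q' ->
  exists u : Hom C k k', comp u q = q' /\ is_iso u.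
Proof.
  intros Hq Hq'.
  destruct Hq as [Hq0 Hqu], Hq' as [Hq0' Hqu'].
  destruct (Hqu k' q' Hq0') as [u [Hu _]].
  destruct (Hqu' k q Hq0) as [v [Hv _]].
  exists u. split; [exact Hu|]. exists v. split.
  - apply (cokernel_epi (conj Hq0 Hqu)).
    rewrite <- comp_assoc, Hu, comp_id_l; exact Hv.
  - apply (cokernel_epi (conj Hq0' Hqu')).
    rewrite <- comp_assoc, Hv, comp_id_l; exact Hu.
Qed.

End Preadditive.

Section AbelianFacts.
Variable A : Abelian.

(* A monomorphism m is a kernel of its cokernel q: every map killed by q
   factors through m. *)
Lemma mono_factor (B1 B0 Kb : A) (m : Hom A B1 B0) (q : Hom A B0 Kb) :
  is_mono m -> is_cokernel m q ->
  forall Y (y : Hom A Y B0), comp q y = zer Y Kb -> exists w, comp m w = y.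
Proof.
  intros Hm [Hq0 Hq] Y y Hy.
  destruct (mono_is_kernel Hm) as [c [f [Hf0 Hf]]].
  destruct (Hq c f Hf0) as [v [Hv _]].
  destruct (Hf Y y) as [w [Hw _]].
  - rewrite <- Hv, <- comp_assoc, Hy, comp_zero_r; reflexivity.
  - exists w; exact Hw.
Qed.

Lemma epi_coker_of_ker (P X Kk : A) (e : Hom A P X) (k : Hom A Kk P) :
  is_epi e -> is_kernel e k -> is_cokernel k e.
Proof.
  intros He [Hk0 Hk]. split; [exact Hk0|].
  intros y g Hg.
  destruct (epi_is_cokernel He) as [c [f [Hf0 Hf]]].
  apply Hf.
  destruct (Hk c f Hf0) as [w [Hw _]].
  rewrite <- Hw, comp_assoc, Hg, comp_zero_l; reflexivity.
Qed.

End AbelianFacts.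

Section Discrete.
Variable A : Abelian.

Definition zhom (x a : arr A) : arr_hom x a.
Proof.
  refine (@ArrHom A x a (zer _ _) (zer _ _) _).
  rewrite comp_zero_r, comp_zero_l; reflexivity.
Defined.

(* Whiskering with a -> 0 kills every 2-arrow, so for a mono a the 2-arrow
   is recovered from a alpha = f0 - g0: a is discrete. *)
Lemma mono_discrete (a : arr A) : is_mono (amap a) -> discrete a.
Proof.
  intros Hm x _ g h al be [_ H2] [_ H4] _.
  apply Hm. rewrite <- H2, <- H4; reflexivity.
Qed.

(* Testing discreteness on x = (0 : P -> P): any alpha : P -> A1 killed by
   a is a 2-arrow from the zero morphism to itself, as is 0, and both have
   the same (zero) whiskering, so alpha = 0. *)
Lemma discrete_kills (a : arr A) (P : A) (alpha : Hom A P (A1 a)) :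
  discrete a -> is_projective P ->
  comp (amap a) alpha = zer P (A0 a) -> alpha = zer P (A1 a).
Proof.
  intros Hd HP Ha.
  set (x := Arr (zer P P)).
  apply (Hd x HP (zhom x a) (zhom x a)).
  - split; simpl.
    + rewrite sub_self, comp_zero_r; reflexivity.
    + rewrite sub_self, Ha; reflexivity.
  - split; simpl; rewrite sub_self, comp_zero_r; reflexivity.
  - simpl; rewrite !comp_zero_l; reflexivity.
Qed.

(* With enough projectives, discreteness forces a to be mono: precompose a
   kernel element with a projective cover and use that covers are epi. *)
Lemma discrete_mono (HA : enough_projectives A) (a : arr A) :
  discrete a -> is_mono (amap a).
Proof.
  intros Hd. apply mono_of_kills_zero. intros X gam Ha.
  destruct (HA X) as [P [e [HP He]]].
  assert (Hcover : comp gam e = zer P (A1 a)).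
  { apply (discrete_kills Hd HP).
    rewrite comp_assoc, Ha, comp_zero_l; reflexivity. }
  apply He. rewrite Hcover, comp_zero_l; reflexivity.
Qed.

End Discrete.

Section CokerFunctor.
Variables (A : Abelian) (K : arr A -> A) (q : forall a : arr A, Hom A (A0 a) (K a))
          (Hq : forall a : arr A, is_cokernel (amap a) (q a)).

Lemma coker_mor_spec (a b : arr A) (f : arr_hom a b) :
  comp (coker_mor Hq f) (q a) = comp (q b) (f0 f).
Proof.
  unfold coker_mor.
  destruct (constructive_indefinite_description _ (coker_mor_ex Hq f)) as [u Hu].
  exact Hu.
Qed.

Lemma coker_mor_char (a b : arr A) (f : arr_hom a b) u :
  comp u (q a) = comp (q b) (f0 f) -> coker_mor Hq f = u.
Proof.
  intro H. apply (cokernel_epi (Hq a)). rewrite coker_mor_spec, H; reflexivity.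
Qed.

(* 2-isomorphic morphisms induce the same map: f0 - g0 = b alpha is killed
   by q b. *)
Lemma coker_mor_two_iso (a b : arr A) (f g : arr_hom a b) :
  two_iso f g -> coker_mor Hq f = coker_mor Hq g.
Proof.
  intros [al [_ H2]].
  symmetry. apply coker_mor_char.
  rewrite coker_mor_spec.
  apply sub_eq0. rewrite <- comp_sub_r, H2, comp_assoc.
  destruct (Hq b) as [Hb _]. rewrite Hb, comp_zero_l; reflexivity.
Qed.

Lemma coker_mor_id (a : arr A) : coker_mor Hq (arr_id a) = idm (K a).
Proof.
  apply coker_mor_char. simpl. rewrite comp_id_l, comp_id_r; reflexivity.
Qed.

Lemma coker_mor_comp (a b c : arr A) (g : arr_hom b c) (f : arr_hom a b) :
  coker_mor Hq (arr_comp g f) = comp (coker_mor Hq g) (coker_mor Hq f).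
Proof.
  apply coker_mor_char. simpl.
  rewrite <- comp_assoc, coker_mor_spec, !comp_assoc, coker_mor_spec; reflexivity.
Qed.

(* Fullness: lift u q_a along the epi q_b (A0 a projective) to g0, then
   g0 a is killed by q_b, hence factors through the mono b as b g1. *)
Lemma coker_full (a b : arr A) :
  in_c a -> is_mono (amap b) ->
  forall u : Hom A (K a) (K b), exists f : arr_hom a b, coker_mor Hq f = u.
Proof.
  intros Ha Hmb u.
  destruct (Ha _ _ (q b) (cokernel_epi (Hq b)) (comp u (q a))) as [g0 Hg0].
  destruct (mono_factor Hmb (Hq b) (y := comp g0 (amap a))) as [g1 Hg1].
  { rewrite comp_assoc, Hg0, <- comp_assoc.
    destruct (Hq a) as [Ha0 _]. rewrite Ha0, comp_zero_r; reflexivity. }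
  exists (@ArrHom A a b g0 g1 Hg1).
  apply coker_mor_char. simpl. symmetry; exact Hg0.
Qed.

(* Faithfulness: if the induced maps agree, f0 - g0 is killed by q_b, so it
   is b alpha; the other 2-cell equation follows by cancelling the mono b. *)
Lemma coker_faithful (a b : arr A) :
  is_mono (amap b) ->
  forall f g : arr_hom a b, coker_mor Hq f = coker_mor Hq g -> two_iso f g.
Proof.
  intros Hmb f g E.
  destruct (mono_factor Hmb (Hq b) (y := sub (f0 f) (f0 g))) as [al Hal].
  { rewrite comp_sub_r, <- (coker_mor_spec f), <- (coker_mor_spec g), E.
    apply sub_self. }
  exists al. split; [|symmetry; exact Hal].
  apply Hmb. rewrite comp_sub_r, !f_comm, <- comp_sub_l, <- Hal, comp_assoc.
  reflexivity.
Qed.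

(* Essential surjectivity: for a projective cover e : P -> X with kernel
   k, the arrow k lies in A^[1]_c, is mono, and X is a cokernel of it. *)
Lemma coker_ess_surj (HA : enough_projectives A) (X : A) :
  exists a : arr A, in_c a /\ is_mono (amap a) /\
    exists u : Hom A (K a) X, is_iso u.
Proof.
  destruct (HA X) as [P [e [HP He]]].
  destruct (has_kernels e) as [Kk [k Hk]].
  exists (Arr k). split; [exact HP|]. split; [exact (kernel_mono Hk)|].
  destruct (cokernel_unique (Hq (Arr k)) (epi_coker_of_ker He Hk))
    as [u [_ Hu]].
  exists u; exact Hu.
Qed.

End CokerFunctor.

Theorem corollary3p3 (A : Abelian) (HA : enough_projectives A) :
  (forall a : arr A, in_c a -> (discrete a <-> is_mono (amap a))) /\
  (forall (K : arr A -> A) (q : forall a : arr A, Hom A (A0 a) (K a))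
          (Hq : forall a : arr A, is_cokernel (amap a) (q a)),
     coker_equivalence Hq).
Proof.
  split.
  { intros a _; split; [apply discrete_mono; exact HA | apply mono_discrete]. }
  intros K q Hq.
  repeat split.
  - intros a b _ _ _ _ f g; apply coker_mor_two_iso.
  - intros a _ _; apply coker_mor_id.
  - intros a b c _ _ _ _ _ _ g f; apply coker_mor_comp.
  - intros a b Ha _ _ Hdb; exact (coker_full Hq Ha (discrete_mono HA Hdb)).
  - intros a b _ _ _ Hdb; exact (coker_faithful (discrete_mono HA Hdb)).
  - intros X.
    destruct (coker_ess_surj Hq HA X) as [a [Hca [Hma Hiso]]].
    exists a; split; [exact Hca | split; [apply mono_discrete; exact Hma | exact Hiso]].
Qed.
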